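(* Let $K$ be a field, $c\in K\setminus\{0\}$, $n\ge1$, and let $f$ be the $c$-frieze of order $n$ associated with an $n$-admissible family $(x_i)_{i\in\mathbb{Z}}$. For all $i,j\in\mathbb{Z}$ with $-1\le j-i\le n$ and $f(i,j)\neq0$: (a) $x_{j+1}=\dfrac{f(i,j+1)-cf(i,j-1)}{f(i,j)}$; (b) $x_{i-1}=\dfrac{f(i-1,j)-cf(i+1,j)}{f(i,j)}$.
   Context: The $c$-continuant polynomials $P_k=P_k^c$ ($k\ge-1$) are defined by $P_{-1}=0$, $P_0=1$, and for $k\ge1$, $P_k(y_1,\dots,y_k)=y_kP_{k-1}(y_1,\dots,y_{k-1})+cP_{k-2}(y_1,\dots,y_{k-2})$. A family $(x_i)_{i\in\mathbb{Z}}$ in $K$ is $n$-admissible if $P_{n+2}(x_i,\dots,x_{i+n+1})=0$ for all $i$. Let $\mathbb{B}_n=\{(i,j)\in\mathbb{Z}^2:-2\le j-i\le n+1\}$. The $c$-frieze of order $n$ associated with $(x_i)$ is $f:\mathbb{B}_n\to K$, $f(i,j)=P_{j-i+1}(x_i,\dots,x_j)$. *)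

From mathcomp Require Import all_boot all_order all_algebra.
Set Implicit Arguments. Unset Strict Implicit. Unset Printing Implicit Defensive.
Import Order.TTheory GRing.Theory Num.Theory.
Local Open Scope ring_scope.

(* contQ c x i m = P^c_{m-1}(x_i, ..., x_{i+m-2}),  i.e. the c-continuant
   polynomial P_{m-1} evaluated at the m-1 consecutive terms of the family x
   starting at index i.  (m = 0 gives P_{-1} = 0, m = 1 gives P_0 = 1.) *)
Fixpoint contQ (K : fieldType) (c : K) (x : int -> K) (i : int) (m : nat) : K :=
  match m with
  | 0%N => 0
  | 1%N => 1
  | (m'.+1 as m1).+1 => x (i + m'%:Z) * contQ c x i m1 + c * contQ c x i m'
  end.

(* P^c_k(x_i, ..., x_{i+k-1}) for k >= -1 (k : int; value for k < -1 is
   irrelevant and set to 0). *)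
Definition contP (K : fieldType) (c : K) (x : int -> K) (i : int) (k : int) : K :=
  if (k < -1)%R then 0 else contQ c x i (absz (k + 1)).

Definition admissible (K : fieldType) (c : K) (n : nat) (x : int -> K) : Prop :=
  forall i : int, contP c x i (n%:Z + 2) = 0.

(* The c-frieze of order n associated with x, on B_n = {-2 <= j-i <= n+1}:
   f(i,j) = P_{j-i+1}(x_i, ..., x_j). *)
Definition frieze (K : fieldType) (c : K) (x : int -> K) (i j : int) : K :=
  contP c x i (j - i + 1).

From mathcomp Require Import all_boot all_order all_algebra.
From mathcomp Require Import ring zify.
Import Order.TTheory GRing.Theory Num.Theory.
Local Open Scope ring_scope.

(* Both identities are the three-term recursions of the continuants, read off
   at the right end (by definition) and at the left end (the mirror recursion
   P_{k+2}(y_1..y_{k+2}) = y_1 P_{k+1}(y_2..y_{k+2}) + c P_k(y_3..y_{k+2}));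
   dividing by the nonzero middle entry solves each for the outer variable.
   In particular they hold for any family, admissible or not. *)

Section Continuants.

Variables (K : fieldType) (c : K) (x : int -> K).

Lemma contQ_recr (i : int) (m : nat) :
  contQ c x i m.+2 = x (i + m%:Z) * contQ c x i m.+1 + c * contQ c x i m.
Proof. by []. Qed.

Lemma contQ_recl (m : nat) (i : int) :
  contQ c x i m.+2 = x i * contQ c x (i + 1) m.+1 + c * contQ c x (i + 2) m.
Proof.
suff recl2 : forall i, contQ c x i m.+2 = x i * contQ c x (i + 1) m.+1 + c * contQ c x (i + 2) m
    /\ contQ c x i m.+3 = x i * contQ c x (i + 1) m.+2 + c * contQ c x (i + 2) m.+1.
  by case: (recl2 i).
elim: m => [|m IHm] {}i.
  by split; rewrite /= ?addr0; ring.
have [IH0 IH1] := IHm i; split=> //.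
rewrite contQ_recr IH1 IH0 [contQ c x (i + 1) m.+3]contQ_recr.
rewrite [contQ c x (i + 2) m.+2]contQ_recr.
have -> : i + 1 + m.+1%:Z = i + m.+2%:Z by lia.
have -> : i + 2 + m%:Z = i + m.+2%:Z by lia.
ring.
Qed.

Lemma frieze_contQ (i j : int) (k : nat) :
  j = i + k%:Z - 2 -> frieze c x i j = contQ c x i k.
Proof.
move=> ->; rewrite /frieze /contP.
have -> : i + k%:Z - 2 - i + 1 + 1 = k%:Z by ring.
by rewrite ltNge (_ : -1 <= _) ?absz_nat //; lia.
Qed.

Lemma strip_index (i j : int) : -1 <= j - i -> exists k : nat, j = i + k.+1%:Z - 2.
Proof.
move=> le_ij; exists (absz (j - i + 1)).
by rewrite -addn1 PoszD gez0_abs; lia.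
Qed.

Lemma frieze_recr (i j : int) : -1 <= j - i ->
  frieze c x i (j + 1) = x (j + 1) * frieze c x i j + c * frieze c x i (j - 1).
Proof.
move=> /strip_index [k def_j].
rewrite (@frieze_contQ i (j + 1) k.+2) ?(@frieze_contQ i j k.+1)
  ?(@frieze_contQ i (j - 1) k) //; try lia.
by rewrite contQ_recr def_j (_ : i + k.+1%:Z - 2 + 1 = i + k%:Z) //; lia.
Qed.

Lemma frieze_recl (i j : int) : -1 <= j - i ->
  frieze c x (i - 1) j = x (i - 1) * frieze c x i j + c * frieze c x (i + 1) j.
Proof.
move=> /strip_index [k def_j].
rewrite (@frieze_contQ (i - 1) j k.+2) ?(@frieze_contQ i j k.+1)
  ?(@frieze_contQ (i + 1) j k) //; try lia.
by rewrite contQ_recl subrK (_ : i - 1 + 2 = i + 1) //; lia.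
Qed.

End Continuants.

Lemma solve_affine (K : fieldType) (a b u v : K) :
  a != 0 -> v = u * a + b -> u = (v - b) / a.
Proof. by move=> nz_a ->; rewrite addrK mulfK. Qed.

Theorem mainTheorem13 (K : fieldType) (c : K) (n : nat) (x : int -> K) :
  c != 0 -> (1 <= n)%N -> admissible c n x ->
  forall i j : int, -1 <= j - i <= n%:Z -> frieze c x i j != 0 ->
    x (j + 1) = (frieze c x i (j + 1) - c * frieze c x i (j - 1)) / frieze c x i j
    /\ x (i - 1) = (frieze c x (i - 1) j - c * frieze c x (i + 1) j) / frieze c x i j.
Proof.
move=> _ _ _ i j /andP [le_ij _] nz_f.
by split; apply: solve_affine nz_f _; rewrite ?frieze_recr ?frieze_recl.
Qed.
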